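(* Let $p$ be an odd prime and $q\in\mathbb C_p$ with $|1-q|_p<p^{-1/(p-1)}$. For $h\in\mathbb Z$, $n\in\mathbb Z_+$ and $r\in\mathbb N$, $$\int_{\mathbb Z_p}E_{n,q}^{(h,-r)}(x)\,d\mu_{-1}(x)=\frac{1}{2^r}\sum_{m=0}^r\frac{1}{[m]_q!}\sum_{k=0}^mq^{(h-r)m}S_1(m-1,k;q)(-1)^k[r]_q^{m-k}E_{n,q}(m)$$ $$=\frac{1}{2^r}\sum_{m=0}^r\frac{1}{[m]_q!}\sum_{k=0}^mq^{(h-r)m}S_1(m-1,k;q)(-1)^k[r]_q^{m-k}\cdot\frac{1}{(1-q)^n}\sum_{j=0}^n\sum_{l=0}^j\binom nj\binom jl(-1)^{j+l}(1-q)^lq^{mj}E_{l,q}.$$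
   Context: For $x\in\mathbb Z_p$, $[x]_q=\frac{1-q^x}{1-q}$; $[m]_q!=[m]_q\cdots[1]_q$, $[0]_q!=1$. The fermionic $p$-adic integral is $\int_{\mathbb Z_p}f(x)\,d\mu_{-1}(x)=\lim_{N\to\infty}\sum_{x=0}^{p^N-1}f(x)(-1)^x$. $E_{n,q}=\int_{\mathbb Z_p}[y]_q^n\,d\mu_{-1}(y)$ and $E_{n,q}(x)=\int_{\mathbb Z_p}[x+y]_q^n\,d\mu_{-1}(y)$ are the $q$-Euler numbers and polynomials. The extended higher-order Nörlund type $q$-Euler polynomials are $E_{n,q}^{(h,-r)}(x)=\frac{1}{(1-q)^n}\sum_{l=0}^n\binom nl(-1)^l\frac{q^{lx}}{\int_{\mathbb Z_p}\cdots\int_{\mathbb Z_p}q^{l(x_1+\cdots+x_r)}q^{\sum_{j=1}^r(h-j)x_j}\,d\mu_{-1}(x_1)\cdots d\mu_{-1}(x_r)}$. The $q$-Stirling numbers of the first kind are defined by $\prod_{k=1}^N(1+[k]_qz)=\sum_{k\ge0}S_1(N,k;q)z^k$ for $N\ge-1$ (empty product $=1$; $S_1(N,k;q)=0$ for $k>N$; $S_1(-1,0;q)=1$). *)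

From mathcomp Require Import all_boot all_order all_algebra.
From mathcomp Require Import boolp reals exp.
Set Implicit Arguments. Unset Strict Implicit. Unset Printing Implicit Defensive.
Import Order.TTheory GRing.Theory Num.Theory.
Local Open Scope ring_scope.

Section PadicDefs.
Variables (R : realType) (K : fieldType).

Record padic_abs (p : nat) (v : K -> R) : Prop := PadicAbs {
  pabs_eq0 : forall x, v x = 0 <-> x = 0;
  pabs_ge0 : forall x, 0 <= v x;
  pabs_mul : forall x y, v (x * y) = v x * v y;
  pabs_ultra : forall x y, v (x + y) <= Num.max (v x) (v y);
  pabs_p : v p%:R = (p%:R)^-1 }.

Definition pcvg (v : K -> R) (u : nat -> K) (l : K) : Prop :=
  forall eps : R, 0 < eps -> exists N : nat, forall m, (N <= m)%N -> v (u m - l) < eps.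

Definition pcauchy (v : K -> R) (u : nat -> K) : Prop :=
  forall eps : R, 0 < eps -> exists N : nat,
    forall m k, (N <= m)%N -> (N <= k)%N -> v (u m - u k) < eps.

Definition pcomplete (v : K -> R) : Prop :=
  forall u, pcauchy v u -> exists l, pcvg v u l.

(* the limit (chosen classically when it exists; 0 otherwise) *)
Definition plim (v : K -> R) (u : nat -> K) : K :=
  match pselect (exists l, pcvg v u l) with
  | left e => proj1_sig (cid e)
  | right _ => 0
  end.

(* Fermionic p-adic integral:  lim_N sum_{x=0}^{p^N-1} f(x) (-1)^x.
   Only the values of f on the naturals enter the definition, so the
   integrand is given as a function nat -> K. *)
Definition fermionic (v : K -> R) (p : nat) (f : nat -> K) : K :=
  plim v (fun N => \sum_(x < p ^ N) f x * (-1) ^+ x).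

(* r-fold iterated fermionic integral of F(x_1,...,x_r), F given on lists
   [:: x_1; ...; x_r]. *)
Fixpoint fermionic_multi (v : K -> R) (p : nat) (r : nat)
    (F : seq nat -> K) : K :=
  match r with
  | 0 => F [::]
  | r'.+1 => fermionic v p (fun x => fermionic_multi v p r' (fun xs => F (x :: xs)))
  end.

Definition qnum (q : K) (x : nat) : K := (1 - q ^+ x) / (1 - q).
Definition qfact (q : K) (m : nat) : K := \prod_(1 <= k < m.+1) qnum q k.

Definition qEuler (v : K -> R) (p : nat) (q : K) (n : nat) : K :=
  fermionic v p (fun y => qnum q y ^+ n).
Definition qEulerPoly (v : K -> R) (p : nat) (q : K) (n : nat) (x : nat) : K :=
  fermionic v p (fun y => qnum q (x + y) ^+ n).

Definition norlund_qEuler (v : K -> R) (p : nat) (q : K) (h : int) (r n : nat)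
    (x : nat) : K :=
  ((1 - q) ^+ n)^-1 *
  \sum_(l < n.+1) ('C(n, l))%:R * (-1) ^+ l * q ^+ (l * x) /
     fermionic_multi v p r (fun xs =>
        q ^+ (l * sumn xs) *
        \prod_(j < r) q ^ ((h - (j.+1)%:Z) * (nth 0%N xs j)%:Z)).

(* q-Stirling numbers of the first kind S_1(N,k;q), N >= -1:
   prod_{k=1}^N (1 + [k]_q z) = sum_k S_1(N,k;q) z^k  (empty product for N = -1). *)
Definition qStirling1 (q : K) (N : int) (k : nat) : K :=
  match N with
  | Posz N' => (\prod_(1 <= i < N'.+1) (1 + qnum q i *: 'X))`_k
  | Negz _ => (k == 0%N)%:R
  end.

End PadicDefs.

From mathcomp Require Import all_boot all_order all_algebra.
From mathcomp Require Import boolp reals exp.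
From mathcomp Require Import ring zify.
Import Order.TTheory GRing.Theory Num.Theory.
Local Open Scope ring_scope.
Set Implicit Arguments. Unset Strict Implicit. Unset Printing Implicit Defensive.

(* If |c - 1|^(p-1) < 1/p then the fermionic integral of x |-> c^x is 2/(1 + c):
   since p^N is odd, the partial sum over x < p^N is (1 + c^(p^N))/(1 + c), and
   |c^(p^N) - 1| = |c - 1|/p^N because p divides C(p,k) for 0 < k < p.  The same
   estimate shows that q is not a root of unity, so [k]_q <> 0.  Every integrand of
   the theorem is a combination of such exponentials with c = q^a, so both sides have
   closed forms.  The iterated integral in the Norlund polynomial is a product of
   values 2/(1 + c) whose reciprocal is 2^-r prod_(j<r) (1 + z q^j), z = q^(h-r+l).
   On the other side the generating function of the q-Stirling numbers turns the
   inner sum into q^((h-r)m) prod_(i<m) ([r]_q - [i]_q), and the q-binomial theorem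
   sum_m prod_(i<m) ([r]_q - [i]_q) z^m / [m]_q! = prod_(j<r) (1 + z q^j) matches
   the two.  The second equality is binomial inversion of E_(n,q)(m) in terms of
   the q-Euler numbers E_(l,q). *)

Lemma exprD1n_sub1 (K : comPzRingType) (t : K) n :
  (t + 1) ^+ n.+2 - 1 =
    n.+2%:R * t + ((\sum_(i < n) t ^+ i.+2 *+ 'C(n.+2, i.+2)) + t ^+ n.+2).
Proof.
rewrite exprD1n big_ord_recl big_ord_recl big_ord_recr /= bin0 bin1 binn.
by rewrite expr0 expr1 !mulr1n mulr_natl; ring.
Qed.

Lemma sum_alt_expr_odd (K : fieldType) (c : K) M : odd M -> 1 + c != 0 ->
  \sum_(x < M) c ^+ x * (-1) ^+ x = (1 + c ^+ M) / (1 + c).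
Proof.
move=> M_odd c1_neq0; apply: (mulIf c1_neq0); rewrite divfK //.
have geom := subrX1 (- c) M.
rewrite exprNn -signr_odd M_odd expr1 in geom.
rewrite (eq_bigr (fun x : 'I_M => c ^+ x * (-1) ^+ x)) in geom; last first.
  by move=> x _; rewrite mulrC -exprNn.
rewrite [LHS](_ : _ = - ((- c - 1) * \sum_(x < M) c ^+ x * (-1) ^+ x)); last by ring.
by rewrite -geom; ring.
Qed.

Lemma subzSS (a : int) (j : nat) : a - (j.+2)%:Z = a - 1 - (j.+1)%:Z.
Proof. by rewrite -addn1 PoszD; ring. Qed.

Section NonArchimedean.
Variables (R : realType) (K : fieldType) (v : K -> R) (p : nat).
Hypothesis Hv : padic_abs p v.

Let pabs_ge0 := pabs_ge0 Hv.
Let pabsM := pabs_mul Hv.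

Lemma pabs0 : v 0 = 0. Proof. exact/(pabs_eq0 Hv). Qed.

Lemma pabs_eq0E x : (v x == 0) = (x == 0).
Proof. by apply/eqP/eqP => [/(pabs_eq0 Hv)|->]; last exact: pabs0. Qed.

Lemma pabs_gt0 x : (0 < v x) = (x != 0).
Proof. by rewrite lt_def pabs_eq0E pabs_ge0 andbT. Qed.

Lemma pabs1 : v 1 = 1.
Proof.
have v1_neq0 : v 1 != 0 by rewrite pabs_eq0E oner_eq0.
by apply: (mulfI v1_neq0); rewrite -pabsM !mulr1.
Qed.

Lemma pabsX x k : v (x ^+ k) = v x ^+ k.
Proof. by elim: k => [|k IH]; rewrite ?pabs1 // !exprS pabsM IH. Qed.

Lemma pabsN x : v (- x) = v x.
Proof.
have vN1 : v (-1) = 1.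
  apply/eqP; rewrite -(eqrXn2 (ltn0Sn 1)) ?pabs_ge0 //.
  by rewrite -pabsX sqrrN !expr1n pabs1.
by rewrite -mulN1r pabsM vN1 mul1r.
Qed.

Lemma pabsV x : v x^-1 = (v x)^-1.
Proof.
have [->|x_neq0] := eqVneq x 0; first by rewrite invr0 pabs0 invr0.
apply: (mulfI (_ : v x != 0)); first by rewrite pabs_eq0E.
by rewrite -pabsM !mulfV ?pabs1 ?pabs_eq0E.
Qed.

Lemma pabsD_le x y B : v x <= B -> v y <= B -> v (x + y) <= B.
Proof. by move=> vx vy; apply: le_trans (pabs_ultra Hv x y) _; rewrite ge_max vx vy. Qed.

Lemma pabsD_lt x y B : v x < B -> v y < B -> v (x + y) < B.
Proof. by move=> vx vy; apply: le_lt_trans (pabs_ultra Hv x y) _; rewrite gt_max vx vy. Qed.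

Lemma pabsD_eq x y : v y < v x -> v (x + y) = v x.
Proof.
move=> vyx; apply/eqP; rewrite eq_le pabsD_le ?(ltW vyx) //=.
rewrite leNgt; apply/negP => vxy_lt.
have vNy : v (- y) < v x by rewrite pabsN.
by have := pabsD_lt vxy_lt vNy; rewrite addrK ltxx.
Qed.

Lemma pabs_sum_le (I : Type) (s : seq I) (P : pred I) (F : I -> K) B :
  0 <= B -> (forall i, P i -> v (F i) <= B) -> v (\sum_(i <- s | P i) F i) <= B.
Proof.
by move=> B_ge0 vF; elim/big_ind: _ => //; [rewrite pabs0 | move=> x y; apply: pabsD_le].
Qed.

Lemma pabs_sum_lt (I : Type) (s : seq I) (P : pred I) (F : I -> K) B :
  0 < B -> (forall i, P i -> v (F i) < B) -> v (\sum_(i <- s | P i) F i) < B.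
Proof.
by move=> B_gt0 vF; elim/big_ind: _ => //; [rewrite pabs0 | move=> x y; apply: pabsD_lt].
Qed.

Lemma pabs_nat_le1 n : v n%:R <= 1.
Proof. by elim: n => [|n IH]; rewrite ?pabs0 // -addn1 natrD pabsD_le ?pabs1. Qed.

Lemma pabs_mulrn_le x n : v (x *+ n) <= v x.
Proof. by rewrite -mulr_natl pabsM ler_piMl ?pabs_nat_le1. Qed.

Lemma pabs_le1_sub1 y : v (y - 1) <= 1 -> v y <= 1.
Proof. by move=> vy; rewrite -(subrK 1 y) pabsD_le ?pabs1. Qed.

Lemma pabs_expX_sub1 y k : v (y - 1) <= 1 -> v (y ^+ k - 1) <= v (y - 1).
Proof.
move=> vy; rewrite subrX1 pabsM ler_piMr //.
apply: pabs_sum_le => // i _.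
by rewrite pabsX exprn_ile1 // pabs_le1_sub1.
Qed.

Hypothesis p_prime : prime p.

Lemma pabs_lt1_p : v p%:R < 1.
Proof. by rewrite (pabs_p Hv) invf_lt1 ?ltr1n ?prime_gt1 ?ltr0n ?prime_gt0. Qed.

Lemma pabs_coprime u : coprime p u -> v u%:R = 1.
Proof.
move=> co_pu; apply/eqP; rewrite eq_le pabs_nat_le1 leNgt; apply/negP => vu_lt1.
have [a _] := Bezoutl u (prime_gt0 p_prime).
rewrite (eqP co_pu) => /dvdnP[w Bezout].
have : v (w%:R * p%:R - a%:R * u%:R) < 1.
  apply: pabsD_lt; rewrite ?pabsN pabsM.
    by apply: le_lt_trans pabs_lt1_p; rewrite ler_piMl ?pabs_nat_le1.
  by apply: le_lt_trans vu_lt1; rewrite ler_piMl ?pabs_nat_le1.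
by rewrite -!natrM -Bezout natrD addrK pabs1 ltxx.
Qed.

Lemma pabs_mulr_binom x k : (0 < k < p)%N -> v (x *+ 'C(p, k)) <= v x / p%:R.
Proof.
move=> k_range; have /dvdnP[m ->] := prime_dvd_bin p_prime k_range.
rewrite mulrnA -(mulr_natl (x *+ m) p) pabsM (pabs_p Hv) mulrC.
by rewrite ler_pM2r ?pabs_mulrn_le // invr_gt0 ltr0n prime_gt0.
Qed.

End NonArchimedean.

Section FermionicIntegral.
Variables (R : realType) (K : fieldType) (v : K -> R) (p : nat).
Hypothesis Hv : padic_abs p v.

Let pabs0 := pabs0 Hv.
Let pabsN := pabsN Hv.
Let pabsD_lt := pabsD_lt Hv.

Lemma pcvg_unique u a b : pcvg v u a -> pcvg v u b -> a = b.
Proof.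
move=> ua ub; apply/eqP; rewrite -subr_eq0 -(pabs_eq0E Hv); apply: contraT => ab_neq0.
have eps_gt0 : 0 < v (a - b) by rewrite lt_def ab_neq0 (pabs_ge0 Hv).
have [Na una] := ua _ eps_gt0; have [Nb unb] := ub _ eps_gt0.
set m := maxn Na Nb.
have vuma : v (- (u m - a)) < v (a - b) by rewrite pabsN una ?leq_maxl.
have := pabsD_lt (unb m (leq_maxr _ _)) vuma.
by rewrite (_ : _ + _ = a - b) ?ltxx //; ring.
Qed.

Lemma plimE u l : pcvg v u l -> plim v u = l.
Proof.
rewrite /plim => ul; case: pselect => [ex|]; last by case; exists l.
by case: (cid ex) => l' /= /pcvg_unique; apply.
Qed.

Definition fermionic_sum (f : nat -> K) (N : nat) : K :=
  \sum_(x < p ^ N) f x * (-1) ^+ x.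

Definition fermionic_cvg (f : nat -> K) (L : K) : Prop := pcvg v (fermionic_sum f) L.

Lemma fermionicE f L : fermionic_cvg f L -> fermionic v p f = L.
Proof. exact: plimE. Qed.

Lemma eq_fermionic_cvg f g L : f =1 g -> fermionic_cvg f L -> fermionic_cvg g L.
Proof. by move=> /funext ->. Qed.

Lemma fermionic_cvgD f g a b :
  fermionic_cvg f a -> fermionic_cvg g b -> fermionic_cvg (fun x => f x + g x) (a + b).
Proof.
move=> fa gb eps eps_gt0; have [Nf hf] := fa _ eps_gt0; have [Ng hg] := gb _ eps_gt0.
exists (maxn Nf Ng) => m; rewrite geq_max => /andP[mNf mNg].
have sumD : fermionic_sum (fun x => f x + g x) m = fermionic_sum f m + fermionic_sum g m.
  by rewrite /fermionic_sum -big_split; apply: eq_bigr => x _; rewrite mulrDl.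
by rewrite sumD opprD addrACA pabsD_lt ?hf ?hg.
Qed.

Lemma fermionic_cvgZ c f a : fermionic_cvg f a -> fermionic_cvg (fun x => c * f x) (c * a).
Proof.
move=> fa eps eps_gt0; have [->|c_neq0] := eqVneq c 0.
  exists 0%N => m _; rewrite /fermionic_sum big1 ?mul0r ?subrr ?pabs0 // => x _.
  by rewrite !mul0r.
have vc_gt0 : 0 < v c by rewrite (pabs_gt0 Hv).
have [N hN] := fa _ (divr_gt0 eps_gt0 vc_gt0); exists N => m mN.
have -> : fermionic_sum (fun x => c * f x) m - c * a = c * (fermionic_sum f m - a).
  by rewrite mulrBr /fermionic_sum mulr_sumr; congr (_ - _); apply: eq_bigr => x _; rewrite mulrA.
by rewrite (pabs_mul Hv) -ltr_pdivlMl // mulrC hN.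
Qed.

Lemma fermionic_cvg_sum n (F : 'I_n -> nat -> K) (a : 'I_n -> K) :
  (forall i, fermionic_cvg (F i) (a i)) ->
  fermionic_cvg (fun x => \sum_(i < n) F i x) (\sum_(i < n) a i).
Proof.
elim: n F a => [|n IH] F a Fa.
  move=> eps eps_gt0; exists 0%N => m _; rewrite big_ord0 subr0 /fermionic_sum big1 ?pabs0 //.
  by move=> x _; rewrite big_ord0 mul0r.
rewrite big_ord_recr /=.
apply: (@eq_fermionic_cvg (fun x => \sum_(i < n) F (widen_ord (leqnSn n) i) x + F ord_max x)).
  by move=> x; rewrite big_ord_recr.
by apply: fermionic_cvgD; [apply: IH | apply: Fa].
Qed.

End FermionicIntegral.

Section Disc.
Variables (R : realType) (K : fieldType) (v : K -> R) (p : nat) (d : R).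
Hypothesis Hv : padic_abs p v.
Hypothesis p_prime : prime p.
Hypothesis p_odd : odd p.
Hypothesis d_ge0 : 0 <= d.
Hypothesis small_d : d ^+ p.-1 < p%:R^-1.

Let pabs0 := pabs0 Hv.
Let pabsX := pabsX Hv.
Let pabs_ge0 := pabs_ge0 Hv.
Let pabs_eq0E := pabs_eq0E Hv.
Let pabsD_eq := pabsD_eq Hv.
Let pabsD_lt := pabsD_lt Hv.
Let pabs_sum_le := pabs_sum_le Hv.
Let pabs_sum_lt := pabs_sum_lt Hv.
Let pabs_mulr_binom := pabs_mulr_binom Hv p_prime.

Let p_gt0 : (0 < p%:R :> R). Proof. by rewrite ltr0n prime_gt0. Qed.

Lemma radius_lt1 : d < 1.
Proof.
rewrite ltNge; apply/negP => d_ge1.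
have p_inv_lt1 : p%:R^-1 < 1 :> R by rewrite invf_lt1 ?ltr1n ?prime_gt1.
by have := lt_trans small_d (lt_le_trans p_inv_lt1 (exprn_ege1 p.-1 d_ge1)); rewrite ltxx.
Qed.

Lemma pabs_exprp_sub1 y : v (y - 1) <= d -> v (y ^+ p - 1) = v (y - 1) / p%:R.
Proof.
move=> vy; set t := y - 1.
have [t0|t_neq0] := eqVneq t 0.
  by rewrite t0 -(subrK 1 y) -/t t0 add0r expr1n subrr pabs0 // mul0r.
have vt_gt0 : 0 < v t by rewrite (pabs_gt0 Hv).
have vt_lt1 : v t < 1 := le_lt_trans vy radius_lt1.
have vtp_gt0 : 0 < v t / p%:R by rewrite divr_gt0.
have p_eq : p = p.-2.+2 by case: p p_prime => [|[|]].
rewrite -(subrK 1 y) -/t p_eq exprD1n_sub1 -p_eq pabsD_eq (pabs_mul Hv) (pabs_p Hv) mulrC //.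
apply: pabsD_lt => //.
  apply: pabs_sum_lt => // i _; apply: le_lt_trans (pabs_mulr_binom _ _) _.
    by rewrite ltn0Sn /=; move: (ltn_ord i); rewrite -2!ltnS -p_eq.
  by rewrite ltr_pM2r ?invr_gt0 // pabsX // ltr_iXnr.
rewrite pabsX -[in v t ^+ p](prednK (prime_gt0 p_prime)) exprS ltr_pM2l //.
by apply: le_lt_trans small_d; rewrite lerXn2r ?nnegrE ?pabs_ge0.
Qed.

Lemma pabs_exprpn_sub1 y N :
  v (y - 1) <= d -> v (y ^+ (p ^ N) - 1) = v (y - 1) / (p ^ N)%:R.
Proof.
move=> vy; elim: N => [|N IH]; first by rewrite expn0 expr1 divr1.
have vyN : v (y ^+ (p ^ N) - 1) <= d.
  rewrite IH; apply: le_trans vy; rewrite ler_pdivrMr ?ltr0n ?expn_gt0 ?prime_gt0 //.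
  by rewrite ler_peMr ?pabs_ge0 ?ler1n ?expn_gt0 ?prime_gt0.
by rewrite expnSr exprM pabs_exprp_sub1 // IH natrM invfM mulrA.
Qed.

Lemma unity_root_near1 y k : v (y - 1) <= d -> (0 < k)%N -> y ^+ k = 1 -> y = 1.
Proof.
move=> vy k_gt0 yk1.
have vy_le1 : v (y - 1) <= 1 := le_trans vy (ltW radius_lt1).
have [m co_pm k_eq] := pfactor_coprime p_prime k_gt0.
set z := y ^+ (p ^ logn p k).
have vz : v (z - 1) <= d := le_trans (pabs_expX_sub1 Hv _ vy_le1) vy.
suff z1 : z = 1.
  have := pabs_exprpn_sub1 (logn p k) vy; rewrite -/z z1 subrr pabs0 => /esym/eqP.
  rewrite mulf_eq0 invr_eq0 pnatr_eq0 expn_eq0 (gtn_eqF (prime_gt0 p_prime)) orbF.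
  by rewrite pabs_eq0E subr_eq0 => /eqP.
have : (z - 1) * \sum_(i < m) z ^+ i = 0.
  by rewrite -subrX1 /z -exprM mulnC -k_eq yk1 subrr.
move/eqP; rewrite mulf_eq0 => /orP[/eqP/subr0_eq //|].
have -> : \sum_(i < m) z ^+ i = m%:R + \sum_(i < m) (z ^+ i - 1).
  by rewrite sumrB sumr_const card_ord addrC subrK.
rewrite -pabs_eq0E pabsD_eq ?(pabs_coprime Hv) ?oner_eq0 //.
apply: le_lt_trans radius_lt1; apply: pabs_sum_le => // i _.
exact: le_trans (pabs_expX_sub1 Hv _ (le_trans vz (ltW radius_lt1))) vz.
Qed.

Lemma pabs2 : v 2 = 1.
Proof. by apply: (pabs_coprime Hv p_prime); rewrite coprimen2. Qed.

Lemma fermionic_cvg_geom c :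
  v (c - 1) <= d -> fermionic_cvg v p (fun x => c ^+ x) (2 / (1 + c)).
Proof.
move=> vc eps eps_gt0.
have v1c : v (1 + c) = 1.
  rewrite (_ : 1 + c = 2 + (c - 1)); last by ring.
  by rewrite pabsD_eq pabs2 // (le_lt_trans vc radius_lt1).
have c1_neq0 : 1 + c != 0 by rewrite -pabs_eq0E v1c oner_eq0.
have [N epsN] : exists N : nat, eps^-1 < N%:R.
  by exists (Num.Def.archi_bound eps^-1); rewrite archi_boundP ?invr_ge0 ?ltW.
exists N => m mN.
have pm_gt0 : (0 < (p ^ m)%:R :> R) by rewrite ltr0n expn_gt0 prime_gt0.
rewrite /fermionic_sum sum_alt_expr_odd ?oddX ?p_odd ?orbT //.
rewrite (_ : _ - _ = (c ^+ (p ^ m) - 1) / (1 + c)); last by field.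
rewrite (pabs_mul Hv) (pabsV Hv) v1c invr1 mulr1.
rewrite (pabs_exprpn_sub1 _ vc).
apply: le_lt_trans (_ : 1 / (p ^ m)%:R < eps).
  by rewrite ler_pM2r ?invr_gt0 // (le_trans vc (ltW radius_lt1)).
rewrite mul1r -invf_plt // ?posrE //; apply: lt_le_trans epsN _.
by rewrite ler_nat (leq_trans mN) // ltnW // ltn_expl // prime_gt1.
Qed.

End Disc.

Section QBinomial.
Variables (K : fieldType) (q : K).
Hypothesis q_neq1 : q != 1.

Let q1_neq0 : 1 - q != 0. Proof. by rewrite subr_eq0 eq_sym. Qed.

Lemma qnum0 : qnum q 0 = 0. Proof. by rewrite /qnum expr0 subrr mul0r. Qed.

Lemma qfact0 : qfact q 0 = 1. Proof. by rewrite /qfact big_geq. Qed.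

Lemma qfactS m : qfact q m.+1 = qfact q m * qnum q m.+1.
Proof. by rewrite /qfact big_nat_recr. Qed.

Definition qfalling (r m : nat) : K := \prod_(i < m) (qnum q r - qnum q i).

Lemma qfalling0 r : qfalling r 0 = 1. Proof. by rewrite /qfalling big_ord0. Qed.

Lemma qfalling_small r m : (r < m)%N -> qfalling r m = 0.
Proof. by move=> rm; rewrite /qfalling (bigD1 (Ordinal rm)) //= subrr mul0r. Qed.

Lemma qfallingSS r m :
  qfalling r.+1 m.+1 = qfalling r m.+1 + qnum q m.+1 * q ^+ r * qfalling r m.
Proof.
rewrite /qfalling big_ord_recl big_ord_recr /= qnum0 subr0.
rewrite (eq_bigr (fun i : 'I_m => q * (qnum q r - qnum q i))) => [|i _]; last first.
  by rewrite /bump /= add1n /qnum !exprS; field.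
rewrite big_split /= prodr_const card_ord mulrA.
have -> : qnum q r.+1 * q ^+ m = (qnum q r - qnum q m) + qnum q m.+1 * q ^+ r.
  by rewrite /qnum !exprS; field.
ring.
Qed.

Hypothesis qnum_neq0 : forall k, (0 < k)%N -> qnum q k != 0.

Lemma qfact_neq0 m : qfact q m != 0.
Proof.
by elim: m => [|m IH]; rewrite ?qfact0 ?oner_eq0 // qfactS mulf_neq0 ?qnum_neq0.
Qed.

Lemma qbinomial r z :
  \sum_(m < r.+1) (qfact q m)^-1 * qfalling r m * z ^+ m = \prod_(j < r) (1 + z * q ^+ j).
Proof.
elim: r => [|r IH].
  by rewrite big_ord_recl !big_ord0 qfact0 qfalling0 invr1 !mul1r addr0.
pose B r m := (qfact q m)^-1 * qfalling r m * z ^+ m.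
have BSS m : B r.+1 m.+1 = B r m.+1 + q ^+ r * z * B r m.
  rewrite /B qfallingSS qfactS exprS.
  by field; rewrite qfact_neq0 qnum_neq0.
have B_last : B r r.+1 = 0 by rewrite /B qfalling_small ?mulr0 ?mul0r.
have IHB : \sum_(m < r.+1) B r m = \prod_(j < r) (1 + z * q ^+ j) := IH.
have shift : B r.+1 0 + \sum_(m < r.+1) B r m.+1 = \prod_(j < r) (1 + z * q ^+ j).
  rewrite -IHB [in RHS]big_ord_recl [in LHS]big_ord_recr /= B_last addr0.
  by rewrite /B !qfact0 !qfalling0.
change (\sum_(m < r.+2) B r.+1 m = \prod_(j < r.+1) (1 + z * q ^+ j)).
rewrite [LHS]big_ord_recl (eq_bigr (fun i : 'I_r.+1 => B r i.+1 + q ^+ r * z * B r i)) => [|i _].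
  by rewrite big_split /= -mulr_sumr addrA shift IHB big_ord_recr /=; ring.
exact: BSS.
Qed.

End QBinomial.

Section QStirling.
Variables (K : fieldType) (q : K) (Y : K).

(* [Y ^+ d * P.[- Y^-1]] for [size P <= d.+1], written without division *)
Definition rev_signed_eval (P : {poly K}) (d : nat) : K :=
  \sum_(k < d.+1) P`_k * (-1) ^+ k * Y ^+ (d - k).

Lemma rev_signed_evalS (P : {poly K}) d :
  (size P <= d.+1)%N -> rev_signed_eval P d.+1 = Y * rev_signed_eval P d.
Proof.
move=> P_size; rewrite /rev_signed_eval big_ord_recr /= nth_default // !mul0r addr0.
rewrite mulr_sumr; apply: eq_bigr => i _.
have i_le_d : (i <= d)%N by rewrite -ltnS.
by rewrite subSn // exprS; ring.
Qed.

Lemma rev_signed_eval_mul_linear (P : {poly K}) d a : (size P <= d.+1)%N ->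
  rev_signed_eval (P * (1 + a *: 'X)) d.+1 = (Y - a) * rev_signed_eval P d.
Proof.
move=> P_size.
have coefE k : (P * (1 + a *: 'X))`_k = P`_k + a * (if k == 0%N then 0 else P`_k.-1).
  by rewrite mulrDr mulr1 -scalerAr coefD coefZ coefMX.
rewrite /rev_signed_eval (eq_bigr (fun k : 'I_d.+2 => P`_k * (-1) ^+ k * Y ^+ (d.+1 - k) +
    a * (if k == 0%N :> nat then 0 else P`_k.-1) * (-1) ^+ k * Y ^+ (d.+1 - k)));
  last by move=> k _; rewrite coefE; ring.
rewrite big_split /= -/(rev_signed_eval P d.+1) rev_signed_evalS //.
rewrite big_ord_recl /= mulr0 !mul0r add0r mulrBl; congr (_ + _).
by rewrite /rev_signed_eval mulr_sumr -sumrN; apply: eq_bigr => i _; rewrite subSS exprS; ring.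
Qed.

Definition qstirling_poly (m : nat) : {poly K} := \prod_(i < m) (1 + qnum q i.+1 *: 'X).

Lemma size_qstirling_poly m : (size (qstirling_poly m) <= m.+1)%N.
Proof.
elim: m => [|m IH]; first by rewrite /qstirling_poly big_ord0 size_poly1.
rewrite /qstirling_poly big_ord_recr /=; apply: leq_trans (size_mul_leq _ _) _.
have lin_size : (size ((1 + qnum q m.+1 *: 'X)%R : {poly K}) <= 2)%N.
  apply: leq_trans (size_add _ _) _; rewrite geq_max size_poly1 /=.
  by apply: leq_trans (size_scale_leq _ _) _; rewrite size_polyX.
by move: IH lin_size; rewrite -/(qstirling_poly m); lia.
Qed.

Lemma rev_signed_eval_qstirling m :
  rev_signed_eval (qstirling_poly m) m = \prod_(i < m) (Y - qnum q i.+1).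
Proof.
elim: m => [|m IH].
  by rewrite /rev_signed_eval /qstirling_poly !big_ord0 big_ord_recl big_ord0 addr0 coef1 /= !mulr1.
rewrite /qstirling_poly big_ord_recr /= -/(qstirling_poly m).
by rewrite rev_signed_eval_mul_linear ?size_qstirling_poly // IH big_ord_recr /= mulrC.
Qed.

Lemma sum_qStirling1 m :
  \sum_(k < m.+1) qStirling1 q (m%:Z - 1) k * (-1) ^+ k * Y ^+ (m - k) =
  \prod_(i < m) (Y - qnum q i).
Proof.
case: m => [|m]; first by rewrite big_ord_recl !big_ord0 addr0 /= !mulr1.
have -> : m.+1%:Z - 1 = m%:Z by rewrite -addn1 PoszD addrK.
rewrite (eq_bigr (fun k : 'I_m.+2 => (qstirling_poly m)`_k * (-1) ^+ k * Y ^+ (m.+1 - k)));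
  last by move=> k _; rewrite /qStirling1 /qstirling_poly big_add1 /= big_mkord.
rewrite -/(rev_signed_eval _ m.+1) rev_signed_evalS ?size_qstirling_poly //.
by rewrite rev_signed_eval_qstirling big_ord_recl /= qnum0 subr0.
Qed.

End QStirling.

Section QPowers.
Variables (K : fieldType) (q : K).
Hypothesis q_neq0 : q != 0.

Lemma exprz_first_factor (e : int) l x s :
  q ^+ (l * (x + s)) * q ^ (e * x%:Z) = (q ^ (l%:Z + e)) ^+ x * q ^+ (l * s).
Proof.
rewrite -[(q ^ _) ^+ x]/((q ^ (l%:Z + e)) ^ x%:Z) exprz_exp.
rewrite -[q ^+ (l * (x + s))]/(q ^ (l * (x + s))%:Z).
rewrite -[q ^+ (l * s)]/(q ^ (l * s)%:Z) -!expfzDr ?q_neq0 //.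
by congr (q ^ _); rewrite !PoszM !PoszD; ring.
Qed.

Lemma inv_prod_2_div_1Dexprz (h : int) r l :
  (\prod_(j < r) (2 / (1 + q ^ (l%:Z + h - (j.+1)%:Z))))^-1 =
  ((2 : K) ^+ r)^-1 * \prod_(j < r) (1 + q ^ (h - r%:Z) * q ^+ l * q ^+ j).
Proof.
rewrite -prodfV; under eq_bigr => j _ do rewrite invf_div.
rewrite big_split /= prodr_const card_ord exprVn mulrC; congr (_ * _).
rewrite (reindex_inj rev_ord_inj) /=; apply: eq_bigr => j _; congr (1 + _).
rewrite -[q ^+ l]/(q ^ (l%:Z)) -[q ^+ j]/(q ^ (j%:Z)) -!expfzDr //.
by congr (q ^ _); rewrite /= subnSK // -subzn ?(ltnW (ltn_ord j)) //; ring.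
Qed.

End QPowers.

Section QEulerIntegrals.
Variables (R : realType) (K : fieldType) (v : K -> R) (p : nat) (q : K).
Hypothesis Hv : padic_abs p v.
Hypothesis p_prime : prime p.
Hypothesis p_odd : odd p.
Hypothesis q_near1 : v (1 - q) < (p%:R : R) `^ (- (p.-1)%:R^-1).
Hypothesis q_neq1 : q != 1.

Lemma qradius_small : v (q - 1) ^+ p.-1 < p%:R^-1.
Proof.
have p1_gt0 : (0 < p.-1)%N by rewrite -ltnS prednK ?prime_gt1 ?prime_gt0.
have p1_neq0 : (p.-1)%:R != 0 :> R by rewrite pnatr_eq0 -lt0n.
have radiusX : ((p%:R : R) `^ (- (p.-1)%:R^-1)) ^+ p.-1 = p%:R^-1.
  by rewrite -powR_mulrn ?powR_ge0 // -powRrM mulNr mulVf // powR_inv1.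
rewrite -radiusX ltrXn2r -?lt0n ?(pabs_ge0 Hv) ?powR_ge0 //.
by rewrite -(pabsN Hv) opprB.
Qed.

Let q_disc := radius_lt1 p_prime qradius_small.

Lemma pabs_q : v q = 1.
Proof. by rewrite -(subrK 1 q) addrC (pabsD_eq Hv) (pabs1 Hv). Qed.

Lemma q_neq0 : q != 0.
Proof. by rewrite -(pabs_eq0E Hv) pabs_q oner_eq0. Qed.

Lemma pabs_exprz_sub1 (a : int) : v (q ^ a - 1) <= v (q - 1).
Proof.
have q_le1 : v (q - 1) <= 1 := ltW q_disc.
case: a => k; first exact: (pabs_expX_sub1 Hv).
have qk_neq0 : q ^+ k.+1 != 0 by rewrite expf_neq0 // q_neq0.
rewrite /exprz (_ : _ - 1 = - (q ^+ k.+1 - 1) * (q ^+ k.+1)^-1); last by field.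
rewrite (pabs_mul Hv) (pabsN Hv) (pabsV Hv) (pabsX Hv) pabs_q expr1n invr1 mulr1.
exact: (pabs_expX_sub1 Hv).
Qed.

Lemma qnum_neq0 k : (0 < k)%N -> qnum q k != 0.
Proof.
move=> k_gt0; rewrite /qnum mulf_neq0 ?invr_eq0 ?subr_eq0 1?eq_sym //.
apply/negP => /eqP/esym qk1; move/negP: q_neq1; apply.
by apply/eqP/(unity_root_near1 Hv p_prime (pabs_ge0 Hv _) qradius_small _ k_gt0).
Qed.

Lemma fermionic_cvg_exprz (a : int) :
  fermionic_cvg v p (fun x => (q ^ a) ^+ x) (2 / (1 + q ^ a)).
Proof.
exact: (fermionic_cvg_geom Hv p_prime p_odd (pabs_ge0 Hv _) qradius_small (pabs_exprz_sub1 a)).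
Qed.

Lemma fermionic_multi_qpow r (h : int) l (c : K) (F : seq nat -> K) :
  (forall xs, F xs = c * (q ^+ (l * sumn xs) *
     \prod_(j < r) q ^ ((h - (j.+1)%:Z) * (nth 0%N xs j)%:Z))) ->
  fermionic_multi v p r F = c * \prod_(j < r) (2 / (1 + q ^ (l%:Z + h - (j.+1)%:Z))).
Proof.
elim: r h c F => [|r IH] h c F F_eq; first by rewrite /= F_eq /= muln0 !big_ord0 !mulr1.
set P := \prod_(j < r) (2 / (1 + q ^ (l%:Z + (h - 1) - (j.+1)%:Z))).
have inner x :
    fermionic_multi v p r (fun xs => F (x :: xs)) = c * P * (q ^ (l%:Z + (h - 1))) ^+ x.
  rewrite (IH (h - 1) (c * (q ^ (l%:Z + (h - 1))) ^+ x)) => [|xs]; first by rewrite /P; ring.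
  rewrite F_eq big_ord_recl /= (mulrA (q ^+ _)) (exprz_first_factor q_neq0) -!mulrA.
  by congr (_ * (_ * (_ * _))); apply: eq_bigr => j _; rewrite (subzSS h j).
rewrite /= (fermionicE Hv (eq_fermionic_cvg (fun x => esym (inner x))
  (fermionic_cvgZ Hv (c * P) (fermionic_cvg_exprz _)))).
rewrite big_ord_recl (eq_bigr (fun j : 'I_r => 2 / (1 + q ^ (l%:Z + (h - 1) - (j.+1)%:Z)))).
  by rewrite -/P addrA mulrAC -mulrA.
by move=> j _; rewrite (subzSS (l%:Z + h) j) [l%:Z + (h - 1)]addrA.
Qed.

Lemma fermionic_cvg_qnum_exp n m :
  fermionic_cvg v p (fun y => qnum q (m + y) ^+ n)
    (((1 - q) ^+ n)^-1 *
     \sum_(l < n.+1) 'C(n, l)%:R * (-1) ^+ l * q ^+ (m * l) * (2 / (1 + q ^+ l))).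
Proof.
apply: (eq_fermionic_cvg (f := fun y => ((1 - q) ^+ n)^-1 * \sum_(l < n.+1)
   ('C(n, l)%:R * (-1) ^+ l * q ^+ (m * l)) * (q ^+ l) ^+ y)).
  move=> y; rewrite /qnum expr_div_n mulrC; congr (_ * _).
  rewrite exprBn; apply: eq_bigr => l _.
  by rewrite expr1n mulr1 exprD exprMn -!exprM (mulnC y l); ring.
apply: (fermionic_cvgZ Hv); apply: (fermionic_cvg_sum Hv) => l.
exact: (fermionic_cvgZ Hv _ (fermionic_cvg_exprz l)).
Qed.

Lemma qEulerPolyE n m : qEulerPoly v p q n m = ((1 - q) ^+ n)^-1 *
  \sum_(l < n.+1) 'C(n, l)%:R * (-1) ^+ l * q ^+ (m * l) * (2 / (1 + q ^+ l)).
Proof. exact: (fermionicE Hv (fermionic_cvg_qnum_exp n m)). Qed.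

Lemma fermionic_cvg_qEuler l : fermionic_cvg v p (fun y => qnum q y ^+ l) (qEuler v p q l).
Proof. by have := fermionic_cvg_qnum_exp l 0; rewrite -qEulerPolyE. Qed.

Lemma sum_binom_qEuler j :
  \sum_(l < j.+1) 'C(j, l)%:R * (-1) ^+ (j + l) * (1 - q) ^+ l * qEuler v p q l =
  (-1) ^+ j * (2 / (1 + q ^+ j)).
Proof.
pose a (l : nat) : K := 'C(j, l)%:R * (-1) ^+ (j + l) * (1 - q) ^+ l.
apply: (pcvg_unique Hv (fermionic_cvg_sum Hv (fun l : 'I_j.+1 =>
  fermionic_cvgZ Hv (a l) (fermionic_cvg_qEuler l)))).
apply: (eq_fermionic_cvg (f := fun y => (-1) ^+ j * (q ^+ j) ^+ y)).
  move=> y; have qnumE : (1 - q) * qnum q y = 1 - q ^+ y.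
    by rewrite /qnum mulrC divfK // subr_eq0 eq_sym.
  rewrite exprAC (_ : q ^+ y = - ((1 - q) * qnum q y) + 1); last by rewrite qnumE; ring.
  rewrite exprD1n mulr_sumr; apply: eq_bigr => l _.
  by rewrite /a -mulr_natl exprD (exprNn ((1 - q) * qnum q y)) (exprMn _ (1 - q)); ring.
exact: (fermionic_cvgZ Hv _ (fermionic_cvg_exprz j)).
Qed.

Lemma qEulerPoly_qEulerE n m : qEulerPoly v p q n m = ((1 - q) ^+ n)^-1 *
  \sum_(j < n.+1) \sum_(l < j.+1) 'C(n, j)%:R * 'C(j, l)%:R * (-1) ^+ (j + l) *
     (1 - q) ^+ l * q ^+ (m * j) * qEuler v p q l.
Proof.
rewrite qEulerPolyE; congr (_ * _); apply: eq_bigr => j _.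
rewrite (eq_bigr (fun l : 'I_j.+1 => 'C(n, j)%:R * q ^+ (m * j) *
  ('C(j, l)%:R * (-1) ^+ (j + l) * (1 - q) ^+ l * qEuler v p q l))) => [|l _]; last by ring.
by rewrite -mulr_sumr sum_binom_qEuler; ring.
Qed.

Lemma fermionic_norlundE (h : int) r n :
  fermionic v p (norlund_qEuler v p q h r n) = ((1 - q) ^+ n)^-1 *
  \sum_(l < n.+1) 'C(n, l)%:R * (-1) ^+ l *
    (((2 : K) ^+ r)^-1 * \prod_(j < r) (1 + q ^ (h - r%:Z) * q ^+ l * q ^+ j)) *
    (2 / (1 + q ^+ l)).
Proof.
apply: (fermionicE Hv); apply: (eq_fermionic_cvg (f := fun x => ((1 - q) ^+ n)^-1 *
  \sum_(l < n.+1) ('C(n, l)%:R * (-1) ^+ l *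
    (((2 : K) ^+ r)^-1 * \prod_(j < r) (1 + q ^ (h - r%:Z) * q ^+ l * q ^+ j))) *
    (q ^+ l) ^+ x)).
  move=> x; rewrite /norlund_qEuler; congr (_ * _); apply: eq_bigr => l _.
  rewrite (fermionic_multi_qpow (h := h) (l := l) (c := 1)) => [|xs]; last by rewrite mul1r.
  by rewrite mul1r -(inv_prod_2_div_1Dexprz q_neq0) -exprM mulrAC.
apply: (fermionic_cvgZ Hv); apply: (fermionic_cvg_sum Hv) => l.
exact: (fermionic_cvgZ Hv _ (fermionic_cvg_exprz l)).
Qed.

Lemma sum_qStirling1_qEulerPoly (h : int) r n :
  ((2 : K) ^+ r)^-1 * \sum_(m < r.+1) (qfact q m)^-1 *
    \sum_(k < m.+1) q ^ ((h - r%:Z) * m%:Z) * qStirling1 q (m%:Z - 1) k *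
      (-1) ^+ k * qnum q r ^+ (m - k) * qEulerPoly v p q n m =
  ((1 - q) ^+ n)^-1 * \sum_(l < n.+1) 'C(n, l)%:R * (-1) ^+ l *
    (((2 : K) ^+ r)^-1 * \prod_(j < r) (1 + q ^ (h - r%:Z) * q ^+ l * q ^+ j)) *
    (2 / (1 + q ^+ l)).
Proof.
set c := ((1 - q) ^+ n)^-1.
have inner m : \sum_(k < m.+1) q ^ ((h - r%:Z) * m%:Z) * qStirling1 q (m%:Z - 1) k *
      (-1) ^+ k * qnum q r ^+ (m - k) * qEulerPoly v p q n m =
    q ^ ((h - r%:Z) * m%:Z) * qfalling q r m * qEulerPoly v p q n m.
  rewrite /qfalling -(sum_qStirling1 q (qnum q r)) mulr_sumr mulr_suml.
  by apply: eq_bigr => k _; ring.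
rewrite (eq_bigr (fun m : 'I_r.+1 => \sum_(l < n.+1) (qfact q m)^-1 *
   (q ^ ((h - r%:Z) * m%:Z) * qfalling q r m *
    (c * ('C(n, l)%:R * (-1) ^+ l * q ^+ (m * l) * (2 / (1 + q ^+ l))))))) => [|m _];
  last by rewrite inner qEulerPolyE -/c !mulr_sumr.
rewrite exchange_big /= !mulr_sumr; apply: eq_bigr => l _.
rewrite -(qbinomial q_neq1 qnum_neq0 r (q ^ (h - r%:Z) * q ^+ l)) !mulr_sumr mulr_suml mulr_sumr.
apply: eq_bigr => m _.
have zX : (q ^ (h - r%:Z) * q ^+ l) ^+ m = q ^ ((h - r%:Z) * m%:Z) * q ^+ (m * l).
  by rewrite exprMn -exprz_exp -exprM (mulnC l m).
by rewrite zX; ring.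
Qed.

End QEulerIntegrals.

Unset Implicit Arguments.
Set Strict Implicit.

Theorem mainTheorem12 (R : realType) (K : closedFieldType) (v : K -> R)
    (p : nat) (q : K) (h : int) (n r : nat) :
  prime p -> odd p ->
  padic_abs p v -> pcomplete v ->
  q != 1 ->
  v (1 - q) < (p%:R : R) `^ (- ((p.-1)%:R)^-1) ->
  (0 < n)%N ->
  let RHS1 :=
    ((2 : K) ^+ r)^-1 * \sum_(m < r.+1) (qfact q m)^-1 *
      \sum_(k < m.+1) q ^ ((h - r%:Z) * m%:Z) * qStirling1 q (m%:Z - 1) k
         * (-1) ^+ k * qnum q r ^+ (m - k) * qEulerPoly v p q n m in
  let RHS2 :=
    ((2 : K) ^+ r)^-1 * \sum_(m < r.+1) (qfact q m)^-1 *
      \sum_(k < m.+1) q ^ ((h - r%:Z) * m%:Z) * qStirling1 q (m%:Z - 1) k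
         * (-1) ^+ k * qnum q r ^+ (m - k) *
         (((1 - q) ^+ n)^-1 *
          \sum_(j < n.+1) \sum_(l < j.+1)
             ('C(n, j))%:R * ('C(j, l))%:R * (-1) ^+ (j + l) * (1 - q) ^+ l
             * q ^+ (m * j) * qEuler v p q l) in
  fermionic v p (norlund_qEuler v p q h r n) = RHS1 /\ RHS1 = RHS2.
Proof.
move=> p_prime p_odd Hv _ q_neq1 q_near1 _ RHS1 RHS2; split.
  by rewrite /RHS1 (sum_qStirling1_qEulerPoly Hv) // (fermionic_norlundE Hv).
rewrite /RHS1 /RHS2; congr (_ * _); apply: eq_bigr => m _; congr (_ * _).
by apply: eq_bigr => k _; rewrite (qEulerPoly_qEulerE Hv).
Qed.
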